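(* Let $P\in\mathbb{R}_+^{n\times n}$ be a stochastic irreducible matrix, $w\in\mathbb{R}^n_+$, $c\in\mathbb{R}^n$, and let $\mathcal X=\{x\in\mathbb{R}^n:\,x=S_0^w(P'x+c)\}$. Let $\pi$ be the unique invariant probability vector of $P$ ($\pi=P'\pi$, $\pi\ge0$, $\mathbbm{1}'\pi=1$; it has positive entries), and, when $\sum_ic_i=0$, let $\nu=\frac12\sum_{k\ge0}\left(\frac{I+P'}{2}\right)^kc$ (a convergent series in that case). Then $\mathcal X$ contains more than one element if and only if $\sum_ic_i=0$ and $$\min_i\left\{\frac{\nu_i}{\pi_i}\right\}+\min_i\left\{\frac{w_i-\nu_i}{\pi_i}\right\}>0.$$ Moreover, in this case, $$\mathcal X=\left\{\nu+\alpha\pi:\,-\min_i\left\{\frac{\nu_i}{\pi_i}\right\}\le\alpha\le\min_i\left\{\frac{w_i-\nu_i}{\pi_i}\right\}\right\}.$$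
   Context: $P$ stochastic: nonnegative with $P\mathbbm{1}=\mathbbm{1}$; irreducible: the directed graph with a link $(i,j)$ whenever $P_{ij}>0$ is strongly connected. $(S_0^w(x))_i=\min\{\max\{x_i,0\},w_i\}$; $P'$ is the transpose. *)

From HB Require Import structures.
From mathcomp Require Import all_boot all_order all_algebra.
From mathcomp Require Import all_classical all_reals all_analysis.
Set Implicit Arguments. Unset Strict Implicit. Unset Printing Implicit Defensive.
Import Order.TTheory GRing.Theory Num.Theory numFieldNormedType.Exports.
Local Open Scope ring_scope.

Section Defs.
Variables (R : realType) (n : nat).

Definition stochastic (P : 'M[R]_n) : Prop :=
  (forall i j, 0 <= P i j) /\ P *m (const_mx 1 : 'cV[R]_n) = const_mx 1.

Definition irreducible (P : 'M[R]_n) : Prop :=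
  forall i j : 'I_n, connect [rel a b | 0 < P a b] i j.

Definition S0 (w x : 'cV[R]_n) : 'cV[R]_n :=
  \col_i Num.min (Num.max (x i 0) 0) (w i 0).

Definition solset (P : 'M[R]_n) (w c : 'cV[R]_n) : set 'cV[R]_n :=
  [set x | x = S0 w (P^T *m x + c)].

Definition halfstep (P : 'M[R]_n) (v : 'cV[R]_n) : 'cV[R]_n :=
  2^-1 *: (v + P^T *m v).

Definition nu (P : 'M[R]_n) (c : 'cV[R]_n) : 'cV[R]_n :=
  \col_i (2^-1 * limn (series (fun k => (iter k (halfstep P) c) i 0))).

End Defs.

Definition minI (R : realType) (n : nat) (F : 'I_n.+1 -> R) : R :=
  \big[Num.min/F ord0]_(i < n.+1) F i.

From HB Require Import structures.
From mathcomp Require Import all_boot all_order all_algebra.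
From mathcomp Require Import all_classical all_reals all_analysis.
From mathcomp Require Import ring lra.
Import Order.TTheory GRing.Theory Num.Theory numFieldNormedType.Exports.
Local Open Scope ring_scope.
Local Open Scope classical_set_scope.
Set Implicit Arguments. Unset Strict Implicit. Unset Printing Implicit Defensive.

(* Two solutions x, y are compared through d = (x - y)^+.  The clamp S_0^w is monotone and
   1-Lipschitz, so d <= P'd entrywise; as P' preserves sums, d = P'd.  By irreducibility a
   nonnegative P'-invariant vector vanishes or is positive everywhere, so distinct solutions are
   strictly ordered, which forces the clamp to be inactive at both: they solve x = P'x + c.
   Summing entries gives sum c = 0, and the solutions of this affine equation are nu + alpha pi.
   Indeed (I + P')/2 is column stochastic with a positive power, hence a strict l1-contraction
   on sum-zero vectors, so the series defining nu converges and telescopes to nu - P'nu = c.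
   Finally the box 0 <= nu + alpha pi <= w is exactly -m1 <= alpha <= m2. *)

Section Clamp.
Variables (R : realType) (w : R).
Hypothesis w_ge0 : 0 <= w.

Definition clamp (t : R) := Num.min (Num.max t 0) w.

Variant clamp_spec (t : R) : R -> Prop :=
  | ClampLow of t <= 0 : clamp_spec t 0
  | ClampIn of 0 <= t & t <= w : clamp_spec t t
  | ClampHigh of w <= t : clamp_spec t w.

Lemma clampP t : clamp_spec t (clamp t).
Proof.
rewrite /clamp; case: (ger0P t) => [t_ge0|t_lt0].
  by case: leP => h; [exact: ClampIn | apply: ClampHigh; rewrite ltW].
by rewrite min_l //; apply: ClampLow; rewrite ltW.
Qed.

Lemma clamp_id t : 0 <= t <= w -> clamp t = t.
Proof. by case: clampP => // [t_le0|w_le] /andP[]; lra. Qed.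

Lemma clamp_in_range t : 0 <= clamp t <= w.
Proof. have := w_ge0; case: (clampP t) => *; apply/andP; split; lra. Qed.

Lemma clamp_pos_part_le a b :
  Num.max (clamp a - clamp b) 0 <= Num.max (a - b) 0.
Proof.
have := w_ge0; by case: (ger0P (a - b)); case: (ger0P (clamp a - clamp b));
  case: (clampP a); case: (clampP b); lra.
Qed.

Lemma clamp_subr_eq a b : b < a -> clamp a - clamp b = a - b ->
  clamp a = a /\ clamp b = b.
Proof. have := w_ge0; by case: (clampP a); case: (clampP b) => *; split; lra. Qed.

End Clamp.

Lemma S0E (R : realType) n (w x : 'cV[R]_n) i : S0 w x i 0 = clamp (w i 0) (x i 0).
Proof. by rewrite mxE. Qed.

Section ColumnStochastic.
Variables (R : realType) (n : nat).
Implicit Types (M : 'M[R]_n) (v : 'cV[R]_n).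

Definition colstoch M := (forall i j, 0 <= M i j) /\ (forall j, \sum_i M i j = 1).

Definition norm1 v := \sum_i `|v i 0|.

Lemma norm1_ge0 v : 0 <= norm1 v.
Proof. exact: sumr_ge0. Qed.

Lemma le_norm1 v i : `|v i 0| <= norm1 v.
Proof. by rewrite /norm1 (bigD1 i) //= lerDl sumr_ge0. Qed.

Lemma colstoch_tr_stochastic (P : 'M[R]_n) : stochastic P -> colstoch P^T.
Proof.
move=> [P_ge0 P1]; split=> [i j|j]; first by rewrite mxE.
have := congr1 (fun u : 'cV[R]_n => u j 0) P1; rewrite !mxE => <-.
by apply: eq_bigr => i _; rewrite !mxE mulr1.
Qed.

Lemma colstoch1 : colstoch 1%:M.
Proof.
split=> [i j|j]; first by rewrite mxE ler0n.
by rewrite (bigD1 j) //= mxE eqxx big1 ?addr0 // => i /negbTE ij; rewrite mxE ij.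
Qed.

Lemma colstoch_mul M1 M2 : colstoch M1 -> colstoch M2 -> colstoch (M1 *m M2).
Proof.
move=> [M1_ge0 M1_sum] [M2_ge0 M2_sum]; split=> [i j|j].
  by rewrite mxE sumr_ge0 // => l _; rewrite mulr_ge0.
under eq_bigr do rewrite mxE.
by rewrite exchange_big -(M2_sum j); apply: eq_bigr => l _; rewrite -mulr_suml M1_sum mul1r.
Qed.

Lemma colstoch_pow M k : colstoch M -> colstoch (M ^+ k).
Proof.
move=> M_cs; elim: k => [|k IH]; first by rewrite expr0; exact: colstoch1.
by rewrite exprS -mulmxE; exact: colstoch_mul.
Qed.

Lemma colstoch_midpoint M1 M2 :
  colstoch M1 -> colstoch M2 -> colstoch (2^-1 *: (M1 + M2)).
Proof.
move=> [M1_ge0 M1_sum] [M2_ge0 M2_sum]; split=> [i j|j].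
  by rewrite !mxE mulr_ge0 ?addr_ge0 // invr_ge0 ler0n.
under eq_bigr do rewrite !mxE.
by rewrite -mulr_sumr big_split /= M1_sum M2_sum mulVf ?pnatr_eq0.
Qed.

Variable M : 'M[R]_n.
Hypothesis M_cs : colstoch M.

Lemma colstoch_sum v : \sum_i (M *m v) i 0 = \sum_i v i 0.
Proof.
under eq_bigr do rewrite mxE.
by rewrite exchange_big; apply: eq_bigr => j _; rewrite -mulr_suml M_cs.2 mul1r.
Qed.

Lemma colstoch_norm1 v : norm1 (M *m v) <= norm1 v.
Proof.
apply: (@le_trans _ _ (\sum_i \sum_j M i j * `|v j 0|)).
  apply: ler_sum => i _; rewrite mxE; apply: le_trans (ler_norm_sum _ _ _) _.
  by apply: ler_sum => j _; rewrite normrM ger0_norm ?M_cs.1.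
by rewrite exchange_big; apply: ler_sum => j _; rewrite -mulr_suml M_cs.2 mul1r.
Qed.

Lemma colstoch_subinvariant v : (forall i, v i 0 <= (M *m v) i 0) -> M *m v = v.
Proof.
move=> le_vMv; have : \sum_i ((M *m v) i 0 - v i 0) = 0.
  by rewrite sumrB colstoch_sum subrr.
move=> /psumr_eq0P eq0; apply/matrixP => i j; rewrite ord1; apply/eqP.
by rewrite -subr_eq0 eq0 // => l _; rewrite subr_ge0.
Qed.

(* Subtracting [d] from every entry of [M] does not change [M v] when [v] sums to zero. *)
Lemma colstoch_contraction (d : R) v : (forall i j, d <= M i j) ->
  \sum_i v i 0 = 0 -> norm1 (M *m v) <= (1 - d *+ n) * norm1 v.
Proof.
move=> d_le sum_v0.
have Mv i : (M *m v) i 0 = \sum_j (M i j - d) * v j 0.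
  by rewrite mxE; under [RHS]eq_bigr do rewrite mulrBl; rewrite sumrB -mulr_sumr sum_v0 mulr0 subr0.
apply: (@le_trans _ _ (\sum_i \sum_j (M i j - d) * `|v j 0|)).
  apply: ler_sum => i _; rewrite Mv; apply: le_trans (ler_norm_sum _ _ _) _.
  by apply: ler_sum => j _; rewrite normrM ger0_norm ?subr_ge0.
rewrite exchange_big /norm1 mulr_sumr; apply: ler_sum => j _.
by rewrite -mulr_suml sumrB M_cs.2 sumr_const card_ord.
Qed.

End ColumnStochastic.

Section ContractingSeries.
Variables (R : realType) (n : nat) (M : 'M[R]_n) (m : nat) (e : R).
Hypotheses (M_cs : colstoch M) (m_gt0 : (0 < m)%N) (e_gt0 : 0 < e).
Implicit Types v : 'cV[R]_n.
Hypothesis M_contr : forall v,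
  \sum_i v i 0 = 0 -> norm1 (M ^+ m *m v) <= (1 - e) * norm1 v.

Lemma sum_norm1_pow_le K v :
  \sum_(0 <= k < K) norm1 (M ^+ k *m v) <= K%:R * norm1 v.
Proof.
rewrite -[K in K%:R]subn0 -sumr_const_nat mulr_suml.
by apply: ler_sum => k _; rewrite mul1r; apply: colstoch_norm1; exact: colstoch_pow.
Qed.

(* The first [m] terms contribute at most [m |v|], the others form the same sum for
   [M^m v], and [C = m/e + m] satisfies [m + C (1 - e) <= C]. *)
Lemma sum_norm1_pow_bounded K v : \sum_i v i 0 = 0 ->
  \sum_(0 <= k < K) norm1 (M ^+ k *m v) <= (m%:R / e + m%:R) * norm1 v.
Proof.
elim/ltn_ind: K v => K IH v sum_v0.
have v_ge0 := norm1_ge0 v; have me_ge0 : 0 <= m%:R / e by rewrite divr_ge0 ?ler0n ?ltW.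
have [K_le|m_lt] := leqP K m.
  apply: le_trans (sum_norm1_pow_le _ _) (ler_wpM2r v_ge0 _).
  by rewrite -[K%:R]add0r lerD ?ler_nat.
rewrite (big_cat_nat _ (ltnW m_lt)) //= -{2}(add0n m) big_addn.
under [X in _ + X <= _]eq_bigr do rewrite exprD -mulmxE -mulmxA.
have head := sum_norm1_pow_le m v.
have tail : \sum_(0 <= k < K - m) norm1 (M ^+ k *m (M ^+ m *m v)) <=
    (m%:R / e + m%:R) * norm1 (M ^+ m *m v).
  apply: IH; first by rewrite ltn_subrL m_gt0 (leq_trans m_gt0 (ltnW m_lt)).
  by rewrite colstoch_sum //; exact: colstoch_pow.
have contr := ler_wpM2l (addr_ge0 me_ge0 (ler0n _ m)) (M_contr sum_v0).
have contr_eq : (m%:R / e + m%:R) * ((1 - e) * norm1 v) =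
    (m%:R / e + m%:R) * norm1 v - m%:R * norm1 v - m%:R * e * norm1 v.
  by field; rewrite gt_eqF.
have : 0 <= m%:R * e * norm1 v by rewrite !mulr_ge0 ?ler0n // ltW.
lra.
Qed.

Lemma contracting_series_cvg v i : \sum_i v i 0 = 0 ->
  cvgn (series (fun k => (M ^+ k *m v) i 0)).
Proof.
move=> sum_v0; apply: normed_cvg; apply: nondecreasing_is_cvgn.
  by apply: nondecreasing_series => k _ _; exact: normr_ge0.
exists ((m%:R / e + m%:R) * norm1 v) => _ [K _ <-] /=.
apply: le_trans (sum_norm1_pow_bounded K sum_v0).
by apply: ler_sum => k _; exact: le_norm1.
Qed.

End ContractingSeries.

Section PositiveDiagonal.
Variables (R : realType) (n : nat) (A : 'M[R]_n).
Hypotheses (A_cs : colstoch A) (A_diag : forall i, 0 < A i i).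

Lemma pow_succ_entry_ge k i j l : (A ^+ k) i l * A l j <= (A ^+ k.+1) i j.
Proof.
rewrite exprSr -mulmxE mxE (bigD1 l) //= lerDl sumr_ge0 // => l' _.
by rewrite mulr_ge0 ?(colstoch_pow k A_cs).1 ?A_cs.1.
Qed.

Lemma pow_diag_gt0 k i : 0 < (A ^+ k) i i.
Proof.
elim: k => [|k IH]; first by rewrite expr0 mxE eqxx ltr01.
exact: lt_le_trans (mulr_gt0 IH (A_diag i)) (pow_succ_entry_ge _ _ _ _).
Qed.

Lemma pow_gt0_of_path j p : path [rel a b | 0 < A b a] j p ->
  forall k, (size p <= k)%N -> 0 < (A ^+ k) (last j p) j.
Proof.
elim: p j => [|a p IH] j /=; first by move=> _ k _; exact: pow_diag_gt0.
move=> /andP[A_aj a_path] [|k] //= size_le.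
exact: lt_le_trans (mulr_gt0 (IH a a_path k size_le) A_aj) (pow_succ_entry_ge _ _ _ _).
Qed.

Lemma primitive_of_connect :
  (forall i j, connect [rel a b | 0 < A b a] i j) ->
  exists2 m, (0 < m)%N & forall i j, 0 < (A ^+ m) i j.
Proof.
move=> A_conn.
have : forall ij : 'I_n * 'I_n, exists m0,
    forall k, (m0 <= k)%N -> 0 < (A ^+ k) ij.1 ij.2.
  move=> [i j] /=; have /connectP [p j_path ->] := A_conn j i.
  by exists (size p); exact: pow_gt0_of_path.
case/fin_all_exists => f f_pos.
exists (\max_ij f ij).+1 => // i j.
by apply: (f_pos (i, j)); apply: leqW; exact: (leq_bigmax (i, j)).
Qed.

End PositiveDiagonal.

Section Irreducible.
Variables (R : realType) (n : nat) (P : 'M[R]_n).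
Hypotheses (P_stoch : stochastic P) (P_irr : irreducible P).

Lemma irreducible_invariant_eq0 (v : 'cV[R]_n) :
  P^T *m v = v -> (forall i, 0 <= v i 0) -> forall k, v k 0 = 0 -> forall j, v j 0 = 0.
Proof.
move=> v_inv v_ge0 k vk0 j; have /connectP [p j_path k_last] := P_irr j k.
elim: p j j_path k_last => [|a p IH] j /=; first by move=> _ <-.
move=> /andP[P_ja a_path] k_last; have va0 := IH a a_path k_last.
have sum_eq0 : \sum_l P l a * v l 0 = 0.
  by rewrite -[RHS]va0 -[in RHS]v_inv mxE; apply: eq_bigr => l _; rewrite mxE.
have /eqP := psumr_eq0P (fun l _ => mulr_ge0 (P_stoch.1 l a) (v_ge0 l)) sum_eq0 (i := j) isT.
by rewrite mulf_eq0 gt_eqF //= => /eqP.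
Qed.

Definition halfstep_mx := 2^-1 *: (1%:M + P^T) : 'M[R]_n.

Lemma halfstepE v : halfstep P v = halfstep_mx *m v.
Proof. by rewrite /halfstep /halfstep_mx -scalemxAl mulmxDl mul1mx. Qed.

Lemma halfstep_iter k v : iter k (halfstep P) v = halfstep_mx ^+ k *m v.
Proof.
elim: k => [|k IH]; first by rewrite expr0 mul1mx.
by rewrite iterS IH halfstepE mulmxA mulmxE -exprS.
Qed.

Lemma halfstep_partial_sum (c : 'cV[R]_n) K :
  let s := \sum_(0 <= k < K) halfstep_mx ^+ k *m c in
  s - P^T *m s = 2%:R *: (c - halfstep_mx ^+ K *m c).
Proof.
move=> s; have -> : s - P^T *m s = 2%:R *: (s - halfstep_mx *m s).
  rewrite /halfstep_mx -scalemxAl scalerBr scalerA mulfV ?pnatr_eq0 // scale1r.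
  by rewrite mulmxDl mul1mx scaler_nat mulr2n opprD addrA addrK.
have := telescope_sumr (fun k => halfstep_mx ^+ k *m c) (leq0n K).
rewrite expr0 mul1mx => tele; rewrite -[c - _]opprB -tele -sumrN /s mulmx_sumr -sumrB.
by congr (_ *: _); apply: eq_bigr => k _; rewrite opprB mulmxA mulmxE -exprS.
Qed.

Lemma halfstep_mx_colstoch : colstoch halfstep_mx.
Proof. exact: colstoch_midpoint (colstoch1 _ _) (colstoch_tr_stochastic P_stoch). Qed.

Lemma halfstep_mx_primitive :
  exists2 m, (0 < m)%N & forall i j, 0 < (halfstep_mx ^+ m) i j.
Proof.
have half_gt0 : 0 < 2^-1 :> R by rewrite invr_gt0 ltr0n.
apply: primitive_of_connect halfstep_mx_colstoch _ _ => [i|i j].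
  by rewrite !mxE eqxx mulr_gt0 // ltr_pwDl ?P_stoch.1.
apply: connect_sub (P_irr i j) => a b /= P_ab; apply: connect1 => /=.
by rewrite !mxE mulr_gt0 // ltr_pwDr ?ler0n.
Qed.

End Irreducible.

Section Nu.
Variables (R : realType) (n : nat) (P : 'M[R]_n.+1) (c : 'cV[R]_n.+1).
Hypotheses (P_stoch : stochastic P) (P_irr : irreducible P) (sum_c0 : \sum_i c i 0 = 0).

Lemma halfstep_mx_contraction : exists2 m, (0 < m)%N & exists2 e : R, 0 < e &
  forall v : 'cV[R]_n.+1, \sum_i v i 0 = 0 ->
    norm1 (halfstep_mx P ^+ m *m v) <= (1 - e) * norm1 v.
Proof.
have [m m_gt0 Am_gt0] := halfstep_mx_primitive P_stoch P_irr.
pose d := \big[Num.min/1]_(ij : 'I_n.+1 * 'I_n.+1) (halfstep_mx P ^+ m) ij.1 ij.2.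
have d_gt0 : 0 < d by apply: lt_bigmin => // -[i j] _; exact: Am_gt0.
exists m => //; exists (d *+ n.+1); first by rewrite pmulrn_lgt0.
move=> v sum_v0; apply: colstoch_contraction sum_v0 => [|i j].
  exact/colstoch_pow/halfstep_mx_colstoch.
exact: (bigmin_le _ (i, j)).
Qed.

Lemma halfstep_series_cvg i : cvgn (series (fun k => (halfstep_mx P ^+ k *m c) i 0)).
Proof.
have [m m_gt0 [e e_gt0 contr]] := halfstep_mx_contraction.
exact: contracting_series_cvg (halfstep_mx_colstoch P_stoch) m_gt0 e_gt0 contr c i sum_c0.
Qed.

Lemma nu_affine : nu P c = P^T *m nu P c + c.
Proof.
pose u i k := (halfstep_mx P ^+ k *m c) i 0.
pose L i := limn (series (u i)).
have u_cvg i : series (u i) @ \oo --> L i := halfstep_series_cvg (i := i).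
have L_eq i : L i - \sum_j P j i * L j = 2 * c i 0.
  have partial K : series (u i) K - \sum_j P j i * series (u j) K = 2 * (c i 0 - u i K).
    have := congr1 (fun x : 'cV[R]_n.+1 => x i 0) (halfstep_partial_sum P c K).
    rewrite /= !mxE summxE; under [X in _ - X = _]eq_bigr do rewrite !mxE summxE.
    by move=> eq; rewrite /u mxE; exact: eq.
  have lhs_cvg : (fun K => series (u i) K - \sum_j P j i * series (u j) K) @ \oo -->
      L i - \sum_j P j i * L j.
    apply: cvgB => //; apply: cvg_big => //.
      exact: (@pseudometric_normed_Zmodule.add_continuous R R^o).
    by move=> j _; apply: cvgMl_tmp.
  have rhs_cvg : (fun K => 2 * (c i 0 - u i K)) @ \oo --> 2 * (c i 0 - 0).
    apply: cvgMl_tmp; apply: cvgB; first exact: cvg_cst.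
    exact: cvg_series_cvg_0 (u_cvg i).
  rewrite (funext partial) in lhs_cvg.
  by rewrite -(subr0 (c i 0)); exact: cvg_unique _ lhs_cvg rhs_cvg.
have nuE i : limn (series (fun k => iter k (halfstep P) c i 0)) = L i.
  by congr (limn (series _)); apply: funext => k; rewrite halfstep_iter.
apply/matrixP => i j; rewrite ord1 !mxE nuE.
under eq_bigr do rewrite !mxE nuE mulrCA.
by rewrite -mulr_sumr; have := L_eq i; lra.
Qed.

End Nu.

Section Solutions.
Variables (R : realType) (n : nat) (P : 'M[R]_n) (w c : 'cV[R]_n).
Hypotheses (P_stoch : stochastic P) (P_irr : irreducible P) (w_ge0 : forall i, 0 <= w i 0).
Implicit Types x y : 'cV[R]_n.

Local Notation X := (solset P w c).

Lemma solsetE x i : X x -> x i 0 = clamp (w i 0) ((P^T *m x + c) i 0).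
Proof. by move=> {1}->; rewrite S0E. Qed.

Lemma solset_in_box x i : X x -> 0 <= x i 0 <= w i 0.
Proof. by move=> /solsetE ->; exact: clamp_in_range. Qed.

Lemma affine_entry_subr x y i :
  (P^T *m x + c) i 0 - (P^T *m y + c) i 0 = \sum_j P j i * (x j 0 - y j 0).
Proof.
rewrite !mxE opprD addrACA subrr addr0 -sumrB.
by apply: eq_bigr => j _; rewrite !mxE mulrBr.
Qed.

Definition pos_diff x y := \col_i Num.max (x i 0 - y i 0) 0.

Lemma pos_diff_ge0 x y i : 0 <= pos_diff x y i 0.
Proof. by rewrite mxE le_max lexx orbT. Qed.

Lemma solset_pos_diff_invariant x y : X x -> X y ->
  P^T *m pos_diff x y = pos_diff x y.
Proof.
move=> Xx Xy; apply: (colstoch_subinvariant (colstoch_tr_stochastic P_stoch)) => i.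
rewrite [pos_diff x y i 0]mxE (solsetE i Xx) (solsetE i Xy).
apply: le_trans (clamp_pos_part_le (w_ge0 i) _ _) _.
rewrite ge_max affine_entry_subr mxE; apply/andP; split; last first.
  by apply: sumr_ge0 => j _; rewrite mxE mulr_ge0 ?P_stoch.1 ?pos_diff_ge0.
apply: ler_sum => j _; rewrite mxE ler_wpM2l ?P_stoch.1 //.
by rewrite mxE le_max lexx.
Qed.

Lemma solset_lt x y k : X x -> X y -> y k 0 < x k 0 -> forall i, y i 0 < x i 0.
Proof.
move=> Xx Xy yx_k i; rewrite -subr_gt0 ltNge; apply/negP => xy_i.
have d_inv := solset_pos_diff_invariant Xx Xy.
have := irreducible_invariant_eq0 P_stoch P_irr d_inv (@pos_diff_ge0 x y) (k := i) _ k.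
by rewrite !mxE max_r // => /(_ erefl); rewrite max_l; lra.
Qed.

Lemma solset_affine_of_lt x y : X x -> X y -> (forall i, y i 0 < x i 0) ->
  x = P^T *m x + c /\ y = P^T *m y + c.
Proof.
move=> Xx Xy yx; have d_inv := solset_pos_diff_invariant Xx Xy.
have dE : pos_diff x y = x - y.
  by apply/matrixP => i j; rewrite ord1 !mxE max_l // subr_ge0 ltW.
rewrite dE in d_inv.
have unclamped i : clamp (w i 0) ((P^T *m x + c) i 0) = (P^T *m x + c) i 0 /\
                   clamp (w i 0) ((P^T *m y + c) i 0) = (P^T *m y + c) i 0.
  have diff : (P^T *m x + c) i 0 - (P^T *m y + c) i 0 = x i 0 - y i 0.
    rewrite affine_entry_subr; transitivity ((x - y) i 0); last by rewrite !mxE.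
    by rewrite -d_inv mxE; apply: eq_bigr => j _; rewrite !mxE.
  apply: (clamp_subr_eq (w_ge0 i)); first by rewrite -subr_gt0 diff subr_gt0.
  by rewrite -(solsetE i Xx) -(solsetE i Xy) diff.
by split; apply/matrixP => i j; rewrite ord1;
  [rewrite {1}(solsetE i Xx) (unclamped i).1 | rewrite {1}(solsetE i Xy) (unclamped i).2].
Qed.

Lemma solset_neq_affine x y : X x -> X y -> x <> y -> x = P^T *m x + c.
Proof.
move=> Xx Xy x_neq_y.
have [k xy_k] : exists k, x k 0 != y k 0.
  apply/existsP; rewrite -negb_forall; apply/negP => /forallP xy_eq.
  by apply: x_neq_y; apply/matrixP => i j; rewrite ord1; apply/eqP.
case: ltgtP xy_k => // [xy|yx] _.
  by case: (solset_affine_of_lt Xy Xx (solset_lt Xy Xx xy)).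
by case: (solset_affine_of_lt Xx Xy (solset_lt Xx Xy yx)).
Qed.

Lemma solset_of_affine x : x = P^T *m x + c -> (forall i, 0 <= x i 0 <= w i 0) -> X x.
Proof.
move=> x_aff x_box; rewrite /solset /= -x_aff.
by apply/matrixP => i j; rewrite ord1 S0E clamp_id.
Qed.

Lemma affine_sum_c0 x : x = P^T *m x + c -> \sum_i c i 0 = 0.
Proof.
move=> x_aff; have : \sum_i x i 0 = \sum_i x i 0 + \sum_i c i 0.
  rewrite -{2}(colstoch_sum (colstoch_tr_stochastic P_stoch) x) -big_split.
  by apply: eq_bigr => i _; rewrite {1}x_aff mxE.
lra.
Qed.

End Solutions.

Lemma le_minI (R : realType) n (F : 'I_n.+1 -> R) b : b <= minI F <-> forall i, b <= F i.
Proof.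
split=> [b_le i|b_le]; first exact: le_trans b_le (bigmin_le _ _ _).
exact: le_bigmin (b_le ord0) (fun i _ => b_le i).
Qed.

Lemma line_in_box (R : realType) n (v w p : 'cV[R]_n.+1) (a : R) :
  (forall i, 0 < p i 0) ->
  (forall i, 0 <= (v + a *: p) i 0 <= w i 0) <->
  - minI (fun i => v i 0 / p i 0) <= a <= minI (fun i => (w i 0 - v i 0) / p i 0).
Proof.
move=> p_gt0; have entryE i : (v + a *: p) i 0 = v i 0 + a * p i 0 by rewrite !mxE.
rewrite lerNl; split=> [box|/andP[/le_minI lo /le_minI hi] i].
  apply/andP; split; apply/le_minI => i; have := box i; rewrite entryE => /andP[? ?].
    by rewrite ler_pdivlMr // mulNr lerNl; lra.
  by rewrite ler_pdivlMr //; lra.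
have := lo i; have := hi i; rewrite !ler_pdivlMr // mulNr lerNl entryE.
by move=> ? ?; apply/andP; split; lra.
Qed.

Section Line.
Variables (R : realType) (n : nat) (P : 'M[R]_n.+1) (w c pi : 'cV[R]_n.+1).
Hypotheses (P_stoch : stochastic P) (P_irr : irreducible P) (w_ge0 : forall i, 0 <= w i 0).
Hypotheses (pi_inv : P^T *m pi = pi) (pi_ge0 : forall i, 0 <= pi i 0).
Hypothesis pi_sum : \sum_i pi i 0 = 1.

Lemma pi_gt0 i : 0 < pi i 0.
Proof.
rewrite lt_neqAle pi_ge0 andbT; apply/eqP => /esym pi_i0.
have pi0 := irreducible_invariant_eq0 P_stoch P_irr pi_inv pi_ge0 pi_i0.
by move: pi_sum; rewrite big1 => [/esym/eqP|j _]; rewrite ?oner_eq0 ?pi0.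
Qed.

(* Subtracting the largest multiple of [pi] that stays below [u] leaves a
   nonnegative invariant vector with a zero entry. *)
Lemma invariant_scale_pi u : P^T *m u = u -> exists t, u = t *: pi.
Proof.
move=> u_inv; have [k _ k_min] := @arg_minP _ _ _ ord0 predT (fun i => u i 0 / pi i 0) isT.
pose t := u k 0 / pi k 0; exists t.
have r_inv : P^T *m (u - t *: pi) = u - t *: pi by rewrite mulmxBr -scalemxAr pi_inv u_inv.
have rE i : (u - t *: pi) i 0 = u i 0 - t * pi i 0 by rewrite !mxE.
have r_ge0 i : 0 <= (u - t *: pi) i 0.
  by rewrite rE subr_ge0 -ler_pdivlMr ?pi_gt0 //; exact: k_min.
have rk0 : (u - t *: pi) k 0 = 0 by rewrite rE divfK ?subrr // gt_eqF ?pi_gt0.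
apply/matrixP => i j; rewrite ord1 [RHS]mxE; apply/eqP; rewrite -subr_eq0 -rE.
by rewrite (irreducible_invariant_eq0 P_stoch P_irr r_inv r_ge0 rk0).
Qed.

Lemma scale_pi_inj a b : a *: pi = b *: pi -> a = b.
Proof.
move=> /(congr1 (fun u : 'cV[R]_n.+1 => u ord0 0)); rewrite !mxE.
by apply: mulIf; rewrite gt_eqF ?pi_gt0.
Qed.

Local Notation X := (solset P w c).
Local Notation m1 := (minI (fun i => nu P c i 0 / pi i 0)).
Local Notation m2 := (minI (fun i => (w i 0 - nu P c i 0) / pi i 0)).

Lemma affine_solutionP x : \sum_i c i 0 = 0 ->
  x = P^T *m x + c <-> exists a, x = nu P c + a *: pi.
Proof.
move=> sum_c0; have nu_aff := nu_affine P_stoch P_irr sum_c0.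
split=> [x_aff|[a ->]]; last by rewrite mulmxDr -scalemxAr pi_inv {1}nu_aff addrAC.
have [a xE] : exists a, x - nu P c = a *: pi.
  apply: invariant_scale_pi; rewrite mulmxBr.
  by rewrite [in RHS]x_aff [in RHS]nu_aff opprD addrACA subrr addr0.
by exists a; rewrite -xE addrC subrK.
Qed.

Lemma solset_line a : \sum_i c i 0 = 0 -> - m1 <= a <= m2 -> X (nu P c + a *: pi).
Proof.
move=> sum_c0 a_range; apply: (solset_of_affine w_ge0).
  by apply/(affine_solutionP _ sum_c0); exists a.
exact: (line_in_box _ _ _ pi_gt0).2 a_range.
Qed.

Lemma solset_neq_line x y : X x -> X y -> x <> y ->
  exists2 a, - m1 <= a <= m2 & x = nu P c + a *: pi.
Proof.
move=> Xx Xy x_neq_y; have x_aff := solset_neq_affine P_stoch P_irr w_ge0 Xx Xy x_neq_y.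
have [a xE] := (affine_solutionP x (affine_sum_c0 P_stoch x_aff)).1 x_aff.
exists a => //; apply/(line_in_box _ _ _ pi_gt0) => i.
by rewrite -xE; exact (solset_in_box w_ge0 i Xx).
Qed.

Local Notation two_solutions := (exists x y, X x /\ X y /\ x <> y).

Lemma two_solutions_sum_c0 : two_solutions -> \sum_i c i 0 = 0.
Proof.
move=> [x [y [Xx [Xy x_neq_y]]]].
exact (affine_sum_c0 P_stoch (solset_neq_affine P_stoch P_irr w_ge0 Xx Xy x_neq_y)).
Qed.

Lemma two_solutionsP : two_solutions <-> \sum_i c i 0 = 0 /\ 0 < m1 + m2.
Proof.
split=> [two|[sum_c0 m_gt0]].
  split; first exact: two_solutions_sum_c0.
  move: two => [x [y [Xx [Xy x_neq_y]]]].
  have [a a_range xE] := solset_neq_line Xx Xy x_neq_y.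
  have [b b_range yE] := solset_neq_line Xy Xx (nesym x_neq_y).
  have : a != b by apply/eqP; apply: contra_not x_neq_y => ab; rewrite xE yE ab.
  by move: a_range b_range; rewrite neq_lt => /andP[? ?] /andP[? ?] /orP[]; lra.
exists (nu P c + (- m1) *: pi), (nu P c + m2 *: pi).
split; [|split]; first (by apply: solset_line; rewrite // lexx; lra).
  by apply: solset_line; rewrite // lexx andbT; lra.
by move=> /addrI /scale_pi_inj; lra.
Qed.

Lemma two_solutions_line : two_solutions ->
  X = [set x | exists a, - m1 <= a <= m2 /\ x = nu P c + a *: pi].
Proof.
move=> two; have sum_c0 := two_solutions_sum_c0 two.
move: two => [x [y [Xx [Xy x_neq_y]]]].
apply/seteqP; split=> [z Xz|z [a [a_range ->]]] /=; last exact: solset_line.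
have [t Xt z_neq_t] : exists2 t, X t & z <> t.
  by case: (eqVneq z x) => [->|/eqP z_neq_x]; [exists y | exists x].
by have [a ? ?] := solset_neq_line Xz Xt z_neq_t; exists a.
Qed.

End Line.

Theorem proposition4 (R : realType) (n : nat) (P : 'M[R]_n.+1)
    (w c pi : 'cV[R]_n.+1) :
  stochastic P -> irreducible P ->
  (forall i, 0 <= w i 0) ->
  P^T *m pi = pi -> (forall i, 0 <= pi i 0) -> \sum_i pi i 0 = 1 ->
  let X := solset P w c in
  let v := nu P c in
  let m1 := minI (fun i => v i 0 / pi i 0) in
  let m2 := minI (fun i => (w i 0 - v i 0) / pi i 0) in
  ((exists x y, X x /\ X y /\ x <> y) <->
     (\sum_i c i 0 = 0 /\ 0 < m1 + m2)) /\
  ((exists x y, X x /\ X y /\ x <> y) ->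
     X = [set x | exists alpha : R, - m1 <= alpha <= m2 /\ x = v + alpha *: pi]).
Proof.
move=> P_stoch P_irr w_ge0 pi_inv pi_ge0 pi_sum X v m1 m2; split.
  exact: two_solutionsP P_stoch P_irr w_ge0 pi_inv pi_ge0 pi_sum.
exact: two_solutions_line P_stoch P_irr w_ge0 pi_inv pi_ge0 pi_sum.
Qed.
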